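(* For all $n,m,N\in\mathbb{Z}$ the automorphisms $s_0,s_1,s_2,\pi,w_0,w_1,r$ act on the $\tau$ functions $\tau^{n,m}_N$ as follows: \[ s_0(\tau^{n,m}_{N})=\tau^{-n,m-n}_{N},\quad s_1(\tau^{n,m}_{N})=\tau^{m-1,n+1}_{N},\quad s_2(\tau^{n,m}_{N})=\tau^{n-m,-m}_{N},\quad \pi(\tau^{n,m}_{N})=\tau^{-m,n-m+1}_{N}, \] \[ w_0(\tau^{n,m}_{N})=\tau^{n,m}_{-N},\quad w_1(\tau^{n,m}_{N})=\tau^{n,m}_{2-N},\quad r(\tau^{n,m}_{N})=\tau^{n,m}_{1-N}. \]
   Context: Let $Q\in\mathbb{C}^\times$ be generic and let $\alpha_0,\alpha_1,\gamma$ be indeterminates; put $\alpha_2:=Q\alpha_0^{-1}\alpha_1^{-1}$, so $\alpha_0\alpha_1\alpha_2=Q$ (these are sixth roots of the usual parameters: $q=Q^6$, $a_i=\alpha_i^6$, $c=\gamma^6$). Let $\tau_i,\bar\tau_i$ ($i\in\mathbb{Z}/3\mathbb{Z}$) be six further indeterminates and $K=\mathbb{C}(\alpha_0,\alpha_1,\gamma,\tau_0,\tau_1,\tau_2,\bar\tau_0,\bar\tau_1,\bar\tau_2)$. Indices are taken mod 3. Define field automorphisms $s_0,s_1,s_2,\pi,w_0,w_1,r$ of $K$ (fixing $\mathbb{C}$) as follows. On parameters: $s_i(\alpha_i)=\alpha_i^{-1}$, $s_i(\alpha_j)=\alpha_j\alpha_i$ ($j\neq i$), $\pi(\alpha_j)=\alpha_{j+1}$,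 $s_i(\gamma)=\pi(\gamma)=\gamma$; $w_0,w_1,r$ fix every $\alpha_j$, and $w_0(\gamma)=\gamma^{-1}$, $w_1(\gamma)=Q^{-2}\gamma^{-1}$, $r(\gamma)=Q^{-1}\gamma^{-1}$. With $u_i=Q^{-2}\gamma^{-4}\alpha_i^6$ and $v_i=Q^{2}\gamma^{4}\alpha_i^6$: $s_i(\tau_i)=\dfrac{u_i\tau_{i+1}\bar\tau_{i-1}+\bar\tau_{i+1}\tau_{i-1}}{Q^{-1}\gamma^{-2}\alpha_i^{3}\,\bar\tau_i}$, $s_i(\bar\tau_i)=\dfrac{v_i\bar\tau_{i+1}\tau_{i-1}+\tau_{i+1}\bar\tau_{i-1}}{Q\gamma^{2}\alpha_i^{3}\,\tau_i}$, and $s_i$ fixes $\tau_j,\bar\tau_j$ for $j\ne i$; $\pi(\tau_i)=\tau_{i+1}$, $\pi(\bar\tau_i)=\bar\tau_{i+1}$; $w_0(\tau_i)=\tau_i$, $w_0(\bar\tau_i)=\dfrac{\alpha_{i+1}^2(\bar\tau_i\tau_{i+1}\tau_{i+2}+u_{i-1}\tau_i\bar\tau_{i+1}\tau_{i+2}+u_{i+1}^{-1}\tau_i\tau_{i+1}\bar\tau_{i+2})}{\alpha_{i+2}^2\,\bar\tau_{i+1}\bar\tau_{i+2}}$; $w_1(\bar\tau_i)=\bar\tau_i$, $w_1(\tau_i)=\dfrac{\alpha_{i+1}^2(\tau_i\bar\tau_{i+1}\bar\tau_{i+2}+v_{i-1}\bar\tau_i\tau_{i+1}\bar\tau_{i+2}+v_{i+1}^{-1}\bar\tau_i\bar\tau_{i+1}\tau_{i+2})}{\alpha_{i+2}^2\,\tau_{i+1}\tau_{i+2}}$;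 $r(\tau_i)=\bar\tau_i$, $r(\bar\tau_i)=\tau_i$. A product of generators denotes composition of automorphisms ($xy=x\circ y$). These generate a realization of the extended affine Weyl group of type $(A_2+A_1)^{(1)}$. Set $T_1=\pi s_2s_1$, $T_2=s_1\pi s_2$, $T_4=rw_0$ (these commute), and define $\tau^{n,m}_N=T_1^{\,n}T_2^{\,m}T_4^{\,N}(\tau_1)$ for $n,m,N\in\mathbb{Z}$. *)

From HB Require Import structures.
From mathcomp Require Import all_boot all_order all_algebra.
From mathcomp Require Import complex.
From mathcomp Require Import mpoly.
From mathcomp Require Import Rstruct.

Set Implicit Arguments.
Unset Strict Implicit.
Unset Printing Implicit Defensive.

Import GRing.Theory.
Local Open Scope ring_scope.

Definition CC : fieldType := complex (Rdefinitions.R : rcfType).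

Section Realization.
Variable L : fieldType.

Definition alpha (Q a0 a1 : L) (i : 'I_3) : L :=
  match nat_of_ord i with
  | 0 => a0
  | 1 => a1
  | _ => Q / (a0 * a1)
  end.

Definition nxt (i : 'I_3) : 'I_3 := ordS i.
Definition prv (i : 'I_3) : 'I_3 := ord_pred i.

Definition uu (Q g : L) (al : 'I_3 -> L) (i : 'I_3) : L :=
  (Q ^+ 2)^-1 * (g ^+ 4)^-1 * al i ^+ 6.
Definition vv (Q g : L) (al : 'I_3 -> L) (i : 'I_3) : L :=
  Q ^+ 2 * g ^+ 4 * al i ^+ 6.

Definition gens (a0 a1 g : L) (tau taub : 'I_3 -> L) (k : 'I_9) : L :=
  match nat_of_ord k with
  | 0 => a0
  | 1 => a1
  | 2 => g
  | 3 => tau 0%R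
  | 4 => tau 1%R
  | 5 => tau (-1)%R
  | 6 => taub 0%R
  | 7 => taub 1%R
  | _ => taub (-1)%R
  end.

Definition s_tau (Q g : L) (al tau taub : 'I_3 -> L) (i : 'I_3) : L :=
  (uu Q g al i * tau (nxt i) * taub (prv i) + taub (nxt i) * tau (prv i))
  / (Q^-1 * (g ^+ 2)^-1 * al i ^+ 3 * taub i).

Definition s_taub (Q g : L) (al tau taub : 'I_3 -> L) (i : 'I_3) : L :=
  (vv Q g al i * taub (nxt i) * tau (prv i) + tau (nxt i) * taub (prv i))
  / (Q * g ^+ 2 * al i ^+ 3 * tau i).

(* w_0(taubar_i)   (note i+2 = i-1 mod 3) *)
Definition w0_taub (Q g : L) (al tau taub : 'I_3 -> L) (i : 'I_3) : L :=
  al (nxt i) ^+ 2 *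
  (taub i * tau (nxt i) * tau (prv i)
   + uu Q g al (prv i) * tau i * taub (nxt i) * tau (prv i)
   + (uu Q g al (nxt i))^-1 * tau i * tau (nxt i) * taub (prv i))
  / (al (prv i) ^+ 2 * taub (nxt i) * taub (prv i)).

Definition w1_tau (Q g : L) (al tau taub : 'I_3 -> L) (i : 'I_3) : L :=
  al (nxt i) ^+ 2 *
  (tau i * taub (nxt i) * taub (prv i)
   + vv Q g al (prv i) * taub i * tau (nxt i) * taub (prv i)
   + (vv Q g al (nxt i))^-1 * taub i * taub (nxt i) * tau (prv i))
  / (al (prv i) ^+ 2 * tau (nxt i) * tau (prv i)).

Definition zpow (f finv : L -> L) (k : int) (x : L) : L :=
  match k with
  | Posz n => iter n f x
  | Negz n => iter n.+1 finv x
  end.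

(* tau^{n,m}_N = T1^n T2^m T4^N (tau_1) *)
Definition tauNM (T1 T1i T2 T2i T4 T4i : L -> L) (t : L) (n m N : int) : L :=
  zpow T1 T1i n (zpow T2 T2i m (zpow T4 T4i N t)).

End Realization.

From HB Require Import structures.
From mathcomp Require Import all_boot all_order all_algebra.
From mathcomp Require Import complex mpoly Rstruct.
From mathcomp Require Import ring zify.

Set Implicit Arguments.
Unset Strict Implicit.
Unset Printing Implicit Defensive.

Import GRing.Theory.
Local Open Scope ring_scope.

(* The translations T1 = pi s2 s1, T2 = s1 pi s2 and T4 = r w0 commute pairwise,
   and each generator of the extended affine Weyl group conjugates them into
   translations again (for instance s0 T1 s0 = (T1 T2)^-1, pi T2 pi^-1 = (T1 T2)^-1,
   w0 T4 w0 = T4^-1).  Hence a generator acts on the orbit T1^n T2^m T4^N (tau_1)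
   by an affine map of (n, m, N), fixed by these conjugations together with the
   image of tau_1, which is tau_1 itself for s0, s2, w0 and T1^-1 T2 tau_1,
   T2 tau_1, T4^2 tau_1, T4 tau_1 for s1, pi, w1, r.  All this only uses the
   defining relations of the group, and these hold for the birational realization
   because an automorphism of K over C is determined by the images of the nine
   generators, where each relation becomes an identity of rational functions. *)

Section RmorphismsOnGenerators.
Variables (L : fieldType) (n : nat) (iota : {rmorphism CC -> L}) (h : 'I_n -> L).

Lemma rmorph_mmap (F : {rmorphism L -> L}) (p : {mpoly CC[n]}) :
  F (mmap iota h p) = mmap (F \o iota) (F \o h) p.
Proof.
rewrite /mmap rmorph_sum; apply: eq_bigr => m _.
rewrite rmorphM /mmap1 rmorph_prod /=; congr (_ * _).
by apply: eq_bigr => i _; rewrite rmorphXn.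
Qed.

Lemma mmap_gen_neq0 :
  (forall p : {mpoly CC[n]}, mmap iota h p = 0 -> p = 0) -> forall k, h k != 0.
Proof.
move=> indep k; apply/eqP => hk0.
have /indep/(congr1 (mcoeff U_(k))) : mmap iota h 'X_k = 0 by rewrite mmapX mmap1U.
by rewrite mcoeffXU eqxx mcoeff0 => /eqP; rewrite oner_eq0.
Qed.

Hypothesis gen : forall x : L, exists p q : {mpoly CC[n]},
  x = mmap iota h p / mmap iota h q.

Lemma eq_rmorph_on_generators (F G : {rmorphism L -> L}) :
  (forall c, F (iota c) = G (iota c)) -> (forall k, F (h k) = G (h k)) -> F =1 G.
Proof.
move=> FGc FGh x; have [p [q ->]] := gen x.
have FG_mmap p' : F (mmap iota h p') = G (mmap iota h p').
  rewrite !rmorph_mmap /mmap /mmap1; apply: eq_bigr => m _ /=.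
  by rewrite FGc; congr (_ * _); apply: eq_bigr => i _; rewrite FGh.
by rewrite !fmorph_div !FG_mmap.
Qed.

End RmorphismsOnGenerators.

Section IntegerIterates.
Variables (L : fieldType) (T Ti : L -> L).
Hypotheses (TK : cancel T Ti) (TiK : cancel Ti T).

Lemma zpow_addr1 (k : int) x : zpow T Ti (k + 1) x = T (zpow T Ti k x).
Proof.
case: k => [k|[|k]].
- by rewrite -PoszD addn1.
- by rewrite /= TiK.
- have -> : Negz k.+1 + 1 = Negz k by rewrite !NegzE; lia.
  by rewrite /= TiK.
Qed.

Lemma zpow_subr1 (k : int) x : zpow T Ti (k - 1) x = Ti (zpow T Ti k x).
Proof. by rewrite -{2}(subrK 1 k) zpow_addr1 TK. Qed.

Lemma zpowD (a b : int) x : zpow T Ti (a + b) x = zpow T Ti a (zpow T Ti b x).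
Proof.
elim/int_ind: a => [|k IH|k IH]; first by rewrite add0r.
- by rewrite intS -addrA (addrC 1) (addrC 1 k%:Z) !zpow_addr1 IH.
- by rewrite intS opprD -addrA (addrC (-1)) (addrC (-1) (- k%:Z)) !zpow_subr1 IH.
Qed.

End IntegerIterates.

Section IntegerIteratesMorph.
Variables (L : fieldType) (T Ti U Ui : L -> L).
Hypotheses (TK : cancel T Ti) (TiK : cancel Ti T) (UK : cancel U Ui) (UiK : cancel Ui U).

Lemma zpow_morph (f : L -> L) : {morph f : x / T x >-> U x} ->
  forall k, {morph f : x / zpow T Ti k x >-> zpow U Ui k x}.
Proof.
move=> fT k x; elim/int_ind: k => [//|k IH|k IH].
- by rewrite intS addrC !zpow_addr1 // fT IH.
rewrite intS opprD addrC !zpow_subr1 // -IH.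
by rewrite -{2}(TiK (zpow T Ti (- k%:Z) x)) fT UK.
Qed.

End IntegerIteratesMorph.

Lemma zpowC (L : fieldType) (T Ti U Ui : L -> L) :
  cancel T Ti -> cancel Ti T -> cancel U Ui -> cancel Ui U -> {morph T : x / U x} ->
  forall a b x, zpow T Ti a (zpow U Ui b x) = zpow U Ui b (zpow T Ti a x).
Proof.
move=> TK TiK UK UiK TU a b x.
apply: (zpow_morph UK UiK UK UiK (f := zpow T Ti a)) => {}x.
exact/esym/(zpow_morph TK TiK TK TiK (f := U)).
Qed.

Section ExtendedAffineWeylGroup.
Variables (L : fieldType) (s0 s1 s2 pi w0 w1 r : L -> L).
Hypotheses (s0K : involutive s0) (braid01 : forall x, s0 (s1 (s0 x)) = s1 (s0 (s1 x))).
Hypotheses (pi_s0 : {morph pi : x / s0 x >-> s1 x}) (pi_s1 : {morph pi : x / s1 x >-> s2 x})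
  (pi_s2 : {morph pi : x / s2 x >-> s0 x}) (pi3 : forall x, pi (pi (pi x)) = x).
Hypotheses (w0K : involutive w0) (w0_s0 : {morph w0 : x / s0 x}) (w0_pi : {morph w0 : x / pi x}).
Hypotheses (rK : involutive r) (r_s0 : {morph r : x / s0 x}) (r_pi : {morph r : x / pi x}).
Hypothesis r_w0_r : forall x, r (w0 (r x)) = w1 x.

Lemma forall_pi (P : L -> Prop) : (forall y, P (pi y)) -> forall x, P x.
Proof. by move=> Ppi x; rewrite -(pi3 x); apply: Ppi. Qed.

Ltac pull_pi := do 8 rewrite -?pi_s0 -?pi_s1 -?pi_s2.

Lemma s1K : involutive s1.
Proof. by apply: forall_pi => y; rewrite -!pi_s0 s0K. Qed.

Lemma s2K : involutive s2.
Proof. by apply: forall_pi => y; rewrite -!pi_s1 s1K. Qed.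

Lemma braid12 x : s1 (s2 (s1 x)) = s2 (s1 (s2 x)).
Proof. by move: x; apply: forall_pi => y; pull_pi; rewrite braid01. Qed.

Lemma braid20 x : s2 (s0 (s2 x)) = s0 (s2 (s0 x)).
Proof. by move: x; apply: forall_pi => y; pull_pi; rewrite braid12. Qed.

Section CommutingWithSimpleReflections.
Variable f : L -> L.
Hypotheses (f_s0 : {morph f : x / s0 x}) (f_pi : {morph f : x / pi x}).

Lemma morph_s1 : {morph f : x / s1 x}.
Proof. by apply: forall_pi => y; rewrite -pi_s0 !f_pi f_s0 pi_s0. Qed.

Lemma morph_s2 : {morph f : x / s2 x}.
Proof. by apply: forall_pi => y; rewrite -pi_s1 !f_pi morph_s1 pi_s1. Qed.

End CommutingWithSimpleReflections.

Local Notation T1 := (pi \o s2 \o s1).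
Local Notation T2 := (s1 \o pi \o s2).
Local Notation T4 := (r \o w0).

Lemma morph_T1 f : {morph f : x / s0 x} -> {morph f : x / pi x} -> {morph f : x / T1 x}.
Proof. by move=> f_s0 f_pi x; rewrite /= f_pi (morph_s2 f_s0 f_pi) (morph_s1 f_s0 f_pi). Qed.

Lemma morph_T2 f : {morph f : x / s0 x} -> {morph f : x / pi x} -> {morph f : x / T2 x}.
Proof. by move=> f_s0 f_pi x; rewrite /= (morph_s1 f_s0 f_pi) f_pi (morph_s2 f_s0 f_pi). Qed.

Lemma w1_s0 : {morph w1 : x / s0 x}.
Proof. by move=> x; rewrite -!r_w0_r r_s0 w0_s0 r_s0. Qed.

Lemma w1_pi : {morph w1 : x / pi x}.
Proof. by move=> x; rewrite -!r_w0_r r_pi w0_pi r_pi. Qed.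

Lemma T4_s0 : {morph T4 : x / s0 x}.
Proof. by move=> x; rewrite /= w0_s0 r_s0. Qed.

Lemma T4_pi : {morph T4 : x / pi x}.
Proof. by move=> x; rewrite /= w0_pi r_pi. Qed.

Lemma T4_s1 : {morph T4 : x / s1 x}.
Proof. exact: morph_s1 T4_s0 T4_pi. Qed.

Lemma T4_s2 : {morph T4 : x / s2 x}.
Proof. exact: morph_s2 T4_s0 T4_pi. Qed.

Lemma T1T2 : {morph T1 : x / T2 x}.
Proof. by move=> x; rewrite /= s1K; pull_pi; rewrite -braid12 s1K. Qed.

Lemma s0_T1 x : T2 (T1 (s0 (T1 x))) = s0 x.
Proof. by rewrite /=; pull_pi; rewrite ?s0K ?s1K ?s2K pi3 -braid01 s0K s1K. Qed.

Lemma s0_T2 : {morph s0 : x / T2 x}.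
Proof. by move=> x; rewrite /=; pull_pi; rewrite ?s0K ?s1K ?s2K braid20. Qed.

Lemma s1_T2 : {morph s1 : x / T2 x >-> T1 x}.
Proof. by move=> x; rewrite /= !s1K. Qed.

Lemma s2_T1 : {morph s2 : x / T1 x}.
Proof. by move=> x; rewrite /=; pull_pi; rewrite ?s0K ?s1K ?s2K braid12. Qed.

Lemma s2_T2 x : T2 (T1 (s2 (T2 x))) = s2 x.
Proof. by rewrite /=; pull_pi; rewrite ?s0K ?s1K ?s2K pi3 -braid01 s0K s1K s0K. Qed.

Lemma pi_T1 : {morph pi : x / T1 x >-> T2 x}.
Proof. by move=> x; rewrite /=; pull_pi; rewrite ?s0K ?s1K ?s2K. Qed.

Lemma pi_T2 x : T2 (T1 (pi (T2 x))) = pi x.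
Proof. by rewrite /=; pull_pi; rewrite ?s0K ?s1K ?s2K pi3 -braid20 s2K s0K s2K. Qed.

Lemma T4_conj_w0 x : T4 (w0 (T4 x)) = w0 x.
Proof. by rewrite /= w0K rK. Qed.

Lemma T4_conj_r x : T4 (r (T4 x)) = r x.
Proof. by rewrite /= rK w0K. Qed.

Lemma T4_conj_w1 x : T4 (w1 (T4 x)) = w1 x.
Proof. by rewrite -!r_w0_r /= rK w0K. Qed.

Variables (T1i T2i T4i : L -> L).
Hypotheses (T1K : cancel T1 T1i) (T1iK : cancel T1i T1) (T2K : cancel T2 T2i)
  (T2iK : cancel T2i T2) (T4K : cancel T4 T4i) (T4iK : cancel T4i T4).

Definition transl (a b c : int) (x : L) : L :=
  zpow T1 T1i a (zpow T2 T2i b (zpow T4 T4i c x)).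

Lemma transl_add a b c a' b' c' x :
  transl a b c (transl a' b' c' x) = transl (a + a') (b + b') (c + c') x.
Proof.
have zT4T1 := zpowC T4K T4iK T1K T1iK (morph_T1 T4_s0 T4_pi).
have zT4T2 := zpowC T4K T4iK T2K T2iK (morph_T2 T4_s0 T4_pi).
have zT1T2 := zpowC T1K T1iK T2K T2iK T1T2.
rewrite /transl zT4T1 zT4T2 -(zpowD T4K T4iK) -zT1T2 -(zpowD T2K T2iK).
by rewrite -(zpowD T1K T1iK).
Qed.

Lemma transl_zpow_morph (f T Ti : L -> L) (d1 d2 d3 : int) : cancel T Ti -> cancel Ti T ->
  {morph f : x / T x >-> transl d1 d2 d3 x} ->
  forall k x, f (zpow T Ti k x) = transl (k * d1) (k * d2) (k * d3) (f x).
Proof.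
move=> TK TiK fT k x; elim/int_ind: k => [|k IH|k IH]; first by rewrite !mul0r.
  by rewrite intS addrC zpow_addr1 // fT IH transl_add; congr transl; ring.
have fTi y : f (Ti y) = transl (- d1) (- d2) (- d3) (f y).
  by rewrite -{2}(TiK y) fT transl_add !addNr.
by rewrite intS opprD addrC zpow_subr1 // fTi IH transl_add; congr transl; ring.
Qed.

Variable t : L.

Lemma transl_affine (f : L -> L) (d1 d2 d3 e1 e2 e3 h1 h2 h3 c1 c2 c3 : int) :
  {morph f : x / T1 x >-> transl d1 d2 d3 x} ->
  {morph f : x / T2 x >-> transl e1 e2 e3 x} ->
  {morph f : x / T4 x >-> transl h1 h2 h3 x} ->
  f t = transl c1 c2 c3 t ->
  forall n m N, f (transl n m N t) = transl (n * d1 + m * e1 + N * h1 + c1)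
     (n * d2 + m * e2 + N * h2 + c2) (n * d3 + m * e3 + N * h3 + c3) t.
Proof.
move=> fT1 fT2 fT4 ft n m N.
rewrite {1}/transl (transl_zpow_morph T1K T1iK fT1) (transl_zpow_morph T2K T2iK fT2).
rewrite (transl_zpow_morph T4K T4iK fT4) ft !transl_add.
by congr transl; ring.
Qed.

Lemma morph_invT1T2 (f U : L -> L) : (forall x, T2 (T1 (f (U x))) = f x) ->
  {morph f : x / U x >-> transl (-1) (-1) 0 x}.
Proof. by move=> fU x; rewrite -(fU x) /transl /= T2K T1K. Qed.

Lemma morph_invT4 (f : L -> L) : (forall x, T4 (f (T4 x)) = f x) ->
  {morph f : x / T4 x >-> transl 0 0 (-1) x}.
Proof. by move=> fT x; rewrite -(fT x) /transl /= T4K. Qed.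

Hypotheses (s0_t : s0 t = t) (s2_t : s2 t = t) (s1_pi_t : s1 (pi t) = pi t) (w0_t : w0 t = t).

Lemma s0_transl n m N : s0 (transl n m N t) = transl (- n) (m - n) N t.
Proof.
rewrite (@transl_affine s0 (-1) (-1) 0 0 1 0 0 0 1 0 0 0) //; first by congr transl; ring.
- exact: morph_invT1T2 s0_T1.
- exact: s0_T2.
- by move=> x; rewrite -T4_s0.
Qed.

Lemma s1_transl n m N : s1 (transl n m N t) = transl (m - 1) (n + 1) N t.
Proof.
rewrite (@transl_affine s1 0 1 0 1 0 0 0 0 1 (-1) 1 0); first by congr transl; ring.
- by [].
- exact: s1_T2.
- by move=> x; rewrite -T4_s1.
- rewrite -[transl _ _ _ t]/(T1i (T2 t)); apply: (can_inj T1K).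
  by rewrite T1iK /= s1K s2_t s1_pi_t.
Qed.

Lemma s2_transl n m N : s2 (transl n m N t) = transl (n - m) (- m) N t.
Proof.
rewrite (@transl_affine s2 1 0 0 (-1) (-1) 0 0 0 1 0 0 0) //; first by congr transl; ring.
- exact: s2_T1.
- exact: morph_invT1T2 s2_T2.
- by move=> x; rewrite -T4_s2.
Qed.

Lemma pi_transl n m N : pi (transl n m N t) = transl (- m) (n - m + 1) N t.
Proof.
rewrite (@transl_affine pi 0 1 0 (-1) (-1) 0 0 0 1 0 1 0); first by congr transl; ring.
- exact: pi_T1.
- exact: morph_invT1T2 pi_T2.
- by move=> x; rewrite -T4_pi.
- by rewrite /transl /= s2_t s1_pi_t.
Qed.

Lemma w0_transl n m N : w0 (transl n m N t) = transl n m (- N) t.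
Proof.
rewrite (@transl_affine w0 1 0 0 0 1 0 0 0 (-1) 0 0 0) //; first by congr transl; ring.
- exact: morph_T1 w0_s0 w0_pi.
- exact: morph_T2 w0_s0 w0_pi.
- exact: morph_invT4 T4_conj_w0.
Qed.

Lemma w1_transl n m N : w1 (transl n m N t) = transl n m (2 - N) t.
Proof.
rewrite (@transl_affine w1 1 0 0 0 1 0 0 0 (-1) 0 0 2); first by congr transl; ring.
- exact: morph_T1 w1_s0 w1_pi.
- exact: morph_T2 w1_s0 w1_pi.
- exact: morph_invT4 T4_conj_w1.
- by rewrite -r_w0_r /transl /= w0_t.
Qed.

Lemma r_transl n m N : r (transl n m N t) = transl n m (1 - N) t.
Proof.
rewrite (@transl_affine r 1 0 0 0 1 0 0 0 (-1) 0 0 1); first by congr transl; ring.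
- exact: morph_T1 r_s0 r_pi.
- exact: morph_T2 r_s0 r_pi.
- exact: morph_invT4 T4_conj_r.
- by rewrite /transl /= w0_t.
Qed.

Theorem tau_lattice_action :
  let tN := tauNM T1 T1i T2 T2i T4 T4i t in
  forall n m N : int,
  s0 (tN n m N) = tN (- n) (m - n) N /\
  s1 (tN n m N) = tN (m - 1) (n + 1) N /\
  s2 (tN n m N) = tN (n - m) (- m) N /\
  pi (tN n m N) = tN (- m) (n - m + 1) N /\
  w0 (tN n m N) = tN n m (- N) /\
  w1 (tN n m N) = tN n m (2 - N) /\
  r (tN n m N) = tN n m (1 - N).
Proof.
move=> tN n m N; rewrite /tN /tauNM -!/(transl _ _ _ _).
by rewrite s0_transl s1_transl s2_transl pi_transl w0_transl w1_transl r_transl.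
Qed.

End ExtendedAffineWeylGroup.

Lemma neq0_scaled (L : fieldType) (x y k : L) : y != 0 -> k != 0 -> x = y * k -> x != 0.
Proof. by move=> y0 k0 ->; rewrite mulf_neq0. Qed.

Section Realization.
Variables (L : fieldType) (iota : {rmorphism CC -> L}) (Q : CC) (a0 a1 g : L)
  (tau taub : 'I_3 -> L).
Hypotheses (HQ : Q != 0)
  (Hindep : forall p : {mpoly CC[9]}, mmap iota (gens a0 a1 g tau taub) p = 0 -> p = 0)
  (Hgen : forall x : L, exists p q : {mpoly CC[9]},
      x = mmap iota (gens a0 a1 g tau taub) p / mmap iota (gens a0 a1 g tau taub) q).
Variables (s : 'I_3 -> {rmorphism L -> L}) (pi w0 w1 r : {rmorphism L -> L}).
Hypothesis HC : forall c : CC, [/\ forall i, s i (iota c) = iota c, pi (iota c) = iota c,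
  w0 (iota c) = iota c, w1 (iota c) = iota c & r (iota c) = iota c].

Local Notation q := (iota Q).
Local Notation al := (alpha q a0 a1).
Local Notation i0 := (0%R : 'I_3).
Local Notation i1 := (1%R : 'I_3).
Local Notation i2 := (2%R : 'I_3).

Hypotheses (Hs_al : forall i j, s i (al j) = if i == j then (al i)^-1 else al j * al i)
  (Hs_g : forall i, s i g = g) (Hpi_al : forall j, pi (al j) = al (nxt j)) (Hpi_g : pi g = g)
  (Hw0_al : forall j, w0 (al j) = al j) (Hw1_al : forall j, w1 (al j) = al j)
  (Hr_al : forall j, r (al j) = al j) (Hw0_g : w0 g = g^-1)
  (Hw1_g : w1 g = (q ^+ 2)^-1 * g^-1) (Hr_g : r g = q^-1 * g^-1).
Hypotheses (Hs_tau : forall i, s i (tau i) = s_tau q g al tau taub i)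
  (Hs_taub : forall i, s i (taub i) = s_taub q g al tau taub i)
  (Hs_other : forall i j, j != i -> s i (tau j) = tau j /\ s i (taub j) = taub j)
  (Hpi_tau : forall i, pi (tau i) = tau (nxt i) /\ pi (taub i) = taub (nxt i))
  (Hw0_tau : forall i, w0 (tau i) = tau i /\ w0 (taub i) = w0_taub q g al tau taub i)
  (Hw1_tau : forall i, w1 (taub i) = taub i /\ w1 (tau i) = w1_tau q g al tau taub i)
  (Hr_tau : forall i, r (tau i) = taub i /\ r (taub i) = tau i).

Lemma ord3E : (nxt i0 = i1) * (nxt i1 = i2) * (nxt i2 = i0)
  * (prv i0 = i2) * (prv i1 = i0) * (prv i2 = i1).
Proof. by do !split; apply/val_inj. Qed.

Lemma m1_ord3 : (-1)%R = i2. Proof. exact/val_inj. Qed.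

Lemma alphaE : (al i0 = a0) * (al i1 = a1) * (al i2 = q / (a0 * a1)).
Proof. by do !split. Qed.

Lemma iota_fixed c : (forall i, s i (iota c) = iota c) * (pi (iota c) = iota c)
  * (w0 (iota c) = iota c) * (w1 (iota c) = iota c) * (r (iota c) = iota c).
Proof. by case: (HC c) => *; do !split. Qed.

Lemma alpha_images :
  (s i0 a0 = a0^-1) * (s i0 a1 = a1 * a0) * (s i1 a0 = a0 * a1) * (s i1 a1 = a1^-1)
  * (s i2 a0 = a0 * (q / (a0 * a1))) * (s i2 a1 = a1 * (q / (a0 * a1)))
  * (pi a0 = a1) * (pi a1 = q / (a0 * a1))
  * (w0 a0 = a0) * (w0 a1 = a1) * (w1 a0 = a0) * (w1 a1 = a1) * (r a0 = a0) * (r a1 = a1).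
Proof.
do !split; [exact: (Hs_al i0 i0) | exact: (Hs_al i0 i1) | exact: (Hs_al i1 i0)
  | exact: (Hs_al i1 i1) | exact: (Hs_al i2 i0) | exact: (Hs_al i2 i1)
  | exact: (Hpi_al i0) | exact: (Hpi_al i1) | exact: (Hw0_al i0) | exact: (Hw0_al i1)
  | exact: (Hw1_al i0) | exact: (Hw1_al i1) | exact: (Hr_al i0) | exact: (Hr_al i1)].
Qed.

Lemma tau_images i :
  (pi (tau i) = tau (nxt i)) * (pi (taub i) = taub (nxt i))
  * (w0 (tau i) = tau i) * (w0 (taub i) = w0_taub q g al tau taub i)
  * (w1 (taub i) = taub i) * (w1 (tau i) = w1_tau q g al tau taub i)
  * (r (tau i) = taub i) * (r (taub i) = tau i).
Proof.
by case: (Hpi_tau i) (Hw0_tau i) (Hw1_tau i) (Hr_tau i) => ? ? [? ?] [? ?] [? ?]; do !split.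
Qed.

Lemma s_fixes_other_taus :
  (s i0 (tau i1) = tau i1) * (s i0 (taub i1) = taub i1) * (s i0 (tau i2) = tau i2)
  * (s i0 (taub i2) = taub i2) * (s i1 (tau i0) = tau i0) * (s i1 (taub i0) = taub i0)
  * (s i1 (tau i2) = tau i2) * (s i1 (taub i2) = taub i2) * (s i2 (tau i0) = tau i0)
  * (s i2 (taub i0) = taub i0) * (s i2 (tau i1) = tau i1) * (s i2 (taub i1) = taub i1).
Proof. by do !split; first [exact: (proj1 (Hs_other _)) | exact: (proj2 (Hs_other _))]. Qed.

Ltac push_morph := rewrite ?rmorphXn ?rmorphM ?rmorphD ?fmorphV ?rmorph1 ?rmorphN ?rmorphB.
Ltac apply_images := rewrite ?iota_fixed ?Hs_g ?Hpi_g ?Hw0_g ?Hw1_g ?Hr_g ?alpha_images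
  ?Hs_tau ?Hs_taub ?s_fixes_other_taus ?tau_images.
Ltac unfold_images := rewrite /s_tau /s_taub /w0_taub /w1_tau /uu /vv ?ord3E ?alphaE.

Lemma gens_neq0 : (a0 != 0) * (a1 != 0) * (g != 0) * (tau i0 != 0) * (tau i1 != 0)
  * (tau i2 != 0) * (taub i0 != 0) * (taub i1 != 0) * (taub i2 != 0).
Proof.
have gen_neq0 k (lt_k9 : (k < 9)%N) := mmap_gen_neq0 Hindep (Ordinal lt_k9).
do !split; [ exact: (gen_neq0 0) | exact: (gen_neq0 1) | exact: (gen_neq0 2)
  | exact: (gen_neq0 3) | exact: (gen_neq0 4) | rewrite -m1_ord3; exact: (gen_neq0 5)
  | exact: (gen_neq0 6) | exact: (gen_neq0 7) | rewrite -m1_ord3; exact: (gen_neq0 8) ].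
Qed.

Lemma q_neq0 : q != 0. Proof. by rewrite fmorph_eq0. Qed.

Ltac nonzero := rewrite ?q_neq0 ?gens_neq0 ?oner_eq0.

(* The side conditions left by [field] when checking the relations on generators
   are, up to monomial factors, the numerators of s_i(tau_i), s_i(taubar_i) and
   w_0(taubar_i); they are nonzero because these are images of nonzero generators. *)
Lemma s0_taub_numer_neq0 : q ^+ 2 * g ^+ 4 * a0 ^+ 6 * taub 1 * tau 2 + tau 1 * taub 2 != 0.
Proof.
have : s i0 (taub i0) != 0 by rewrite fmorph_eq0 gens_neq0.
by rewrite Hs_taub; unfold_images; rewrite mulf_eq0 negb_or => /andP[].
Qed.

Lemma s1_taub_numer_neq0 : q ^+ 2 * g ^+ 4 * a1 ^+ 6 * taub 2 * tau 0 + tau 2 * taub 0 != 0.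
Proof.
have : s i1 (taub i1) != 0 by rewrite fmorph_eq0 gens_neq0.
by rewrite Hs_taub; unfold_images; rewrite mulf_eq0 negb_or => /andP[].
Qed.

Ltac nonzero_prod := repeat (apply: mulf_neq0 || apply: expf_neq0); nonzero.

Lemma s0_tau_numer_neq0 : a0 ^+ 6 * tau 1 * taub 2 + taub 1 * tau 2 * (q ^+ 2 * g ^+ 4) != 0.
Proof.
have : s i0 (tau i0) != 0 by rewrite fmorph_eq0 gens_neq0.
rewrite Hs_tau; unfold_images; rewrite mulf_eq0 negb_or => /andP[numer_neq0 _].
apply: (neq0_scaled numer_neq0 (k := q ^+ 2 * g ^+ 4)); first by nonzero_prod.
by field; nonzero.
Qed.

Lemma s1_tau_numer_neq0 : a1 ^+ 6 * tau 2 * taub 0 + taub 2 * tau 0 * (q ^+ 2 * g ^+ 4) != 0.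
Proof.
have : s i1 (tau i1) != 0 by rewrite fmorph_eq0 gens_neq0.
rewrite Hs_tau; unfold_images; rewrite mulf_eq0 negb_or => /andP[numer_neq0 _].
apply: (neq0_scaled numer_neq0 (k := q ^+ 2 * g ^+ 4)); first by nonzero_prod.
by field; nonzero.
Qed.

Lemma w0_taub0_numer_neq0 :
  taub 0 * tau 1 * tau 2 * (g ^+ 4 * (a0 * a1) ^+ 6) + q ^+ 4 * tau 0 * taub 1 * tau 2
  + q ^+ 2 * g ^+ 4 * tau 0 * tau 1 * taub 2 * (g ^+ 4 * a0 ^+ 6) != 0.
Proof.
have : w0 (taub i0) != 0 by rewrite fmorph_eq0 gens_neq0.
rewrite tau_images; unfold_images.
rewrite !mulf_eq0 !negb_or => /andP[/andP[_ numer_neq0] _].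
apply: (neq0_scaled numer_neq0 (k := g ^+ 4 * (a0 * a1) ^+ 6)); first by nonzero_prod.
by field; nonzero.
Qed.

Lemma w0_taub1_numer_neq0 :
  (taub 1 * tau 2 * tau 0 * (q ^+ 2 * g ^+ 4) + a0 ^+ 6 * tau 1 * taub 2 * tau 0) * q ^+ 2
  + g ^+ 4 * (a0 * a1) ^+ 6 * tau 1 * tau 2 * taub 0 * g ^+ 4 != 0.
Proof.
have : w0 (taub i1) != 0 by rewrite fmorph_eq0 gens_neq0.
rewrite tau_images; unfold_images.
rewrite !mulf_eq0 !negb_or => /andP[/andP[_ numer_neq0] _].
apply: (neq0_scaled numer_neq0 (k := q ^+ 4 * g ^+ 4)); first by nonzero_prod.
by field; nonzero.
Qed.

Lemma w0_taub2_numer_neq0 :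
  (taub 2 * tau 0 * tau 1 * (q ^+ 2 * g ^+ 4) + a1 ^+ 6 * tau 2 * taub 0 * tau 1) * a0 ^+ 6
  + q ^+ 2 * g ^+ 4 * tau 2 * tau 0 * taub 1 * (q ^+ 2 * g ^+ 4) != 0.
Proof.
have : w0 (taub i2) != 0 by rewrite fmorph_eq0 gens_neq0.
rewrite tau_images; unfold_images.
rewrite !mulf_eq0 !negb_or => /andP[/andP[_ numer_neq0] _].
apply: (neq0_scaled numer_neq0 (k := q ^+ 2 * g ^+ 4 * a0 ^+ 6)); first by nonzero_prod.
by field; nonzero.
Qed.

Ltac case_gens :=
  case=> [[|[|[|[|[|[|[|[|[|//]]]]]]]]] ?]; rewrite /gens /= ?m1_ord3.

Ltac by_generators :=
  apply: (eq_rmorph_on_generators Hgen);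
    [ by move=> c /=; rewrite ?iota_fixed
    | case_gens; do 6 (push_morph; apply_images; unfold_images); field;
      nonzero; rewrite ?s0_taub_numer_neq0 ?s1_taub_numer_neq0
        ?s0_tau_numer_neq0 ?s1_tau_numer_neq0 ?w0_taub0_numer_neq0 ?w0_taub1_numer_neq0
        ?w0_taub2_numer_neq0 ].

Lemma s0_braid : s i0 \o s i1 \o s i0 =1 s i1 \o s i0 \o s i1.
Proof. by by_generators. Qed.

Lemma s0_invol : s i0 \o s i0 =1 idfun.
Proof. by by_generators. Qed.

Lemma pi_s0 : pi \o s i0 =1 s i1 \o pi.
Proof. by by_generators. Qed.

Lemma pi_s1 : pi \o s i1 =1 s i2 \o pi.
Proof. by by_generators. Qed.

Lemma pi_s2 : pi \o s i2 =1 s i0 \o pi.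
Proof. by by_generators. Qed.

Lemma pi_order3 : pi \o pi \o pi =1 idfun.
Proof. by by_generators. Qed.

Lemma w0_invol : w0 \o w0 =1 idfun.
Proof. by by_generators. Qed.

Lemma w0_s0 : w0 \o s i0 =1 s i0 \o w0.
Proof. by by_generators. Qed.

Lemma w0_pi : w0 \o pi =1 pi \o w0.
Proof. by by_generators. Qed.

Lemma r_invol : r \o r =1 idfun.
Proof. by by_generators. Qed.

Lemma r_s0 : r \o s i0 =1 s i0 \o r.
Proof. by by_generators. Qed.

Lemma r_pi : r \o pi =1 pi \o r.
Proof. by by_generators. Qed.

Lemma r_w0_r : r \o w0 \o r =1 w1.
Proof. by by_generators. Qed.

Variables (T1i T2i T4i : L -> L).
Hypotheses (HT1i : cancel (pi \o s i2 \o s i1) T1i) (HT1i' : cancel T1i (pi \o s i2 \o s i1))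
  (HT2i : cancel (s i1 \o pi \o s i2) T2i) (HT2i' : cancel T2i (s i1 \o pi \o s i2))
  (HT4i : cancel (r \o w0) T4i) (HT4i' : cancel T4i (r \o w0)).

Theorem realization_tau_lattice_action :
  let tN := tauNM (pi \o s i2 \o s i1) T1i (s i1 \o pi \o s i2) T2i (r \o w0) T4i (tau i1) in
  forall n m N : int,
  s i0 (tN n m N) = tN (- n) (m - n) N /\
  s i1 (tN n m N) = tN (m - 1) (n + 1) N /\
  s i2 (tN n m N) = tN (n - m) (- m) N /\
  pi (tN n m N) = tN (- m) (n - m + 1) N /\
  w0 (tN n m N) = tN n m (- N) /\
  w1 (tN n m N) = tN n m (2 - N) /\
  r (tN n m N) = tN n m (1 - N).
Proof.
have s0_tau1 : s i0 (tau i1) = tau i1 by rewrite s_fixes_other_taus.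
have s2_tau1 : s i2 (tau i1) = tau i1 by rewrite s_fixes_other_taus.
have s1_pi_tau1 : s i1 (pi (tau i1)) = pi (tau i1).
  by rewrite tau_images ord3E s_fixes_other_taus.
have w0_tau1 : w0 (tau i1) = tau i1 by rewrite tau_images.
exact: (@tau_lattice_action L (s i0) (s i1) (s i2) pi w0 w1 r s0_invol s0_braid pi_s0 pi_s1
  pi_s2 pi_order3 w0_invol w0_s0 w0_pi r_invol r_s0 r_pi r_w0_r T1i T2i T4i HT1i HT1i' HT2i
  HT2i' HT4i HT4i' (tau i1) s0_tau1 s2_tau1 s1_pi_tau1 w0_tau1).
Qed.

End Realization.

Theorem proposition3p3
  (L : fieldType) (iota : {rmorphism CC -> L})
  (Q : CC) (HQ : Q != 0)
  (a0 a1 g : L) (tau taub : 'I_3 -> L)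
  (* K = C(alpha_0, alpha_1, gamma, tau_i, taubar_i): the nine elements are
     algebraically independent over C and generate L as a field over C *)
  (Hindep : forall p : {mpoly CC[9]}, mmap iota (gens a0 a1 g tau taub) p = 0 -> p = 0)
  (Hgen : forall x : L, exists p q : {mpoly CC[9]},
      x = mmap iota (gens a0 a1 g tau taub) p / mmap iota (gens a0 a1 g tau taub) q)
  (s : 'I_3 -> {rmorphism L -> L}) (pi w0 w1 r : {rmorphism L -> L})
  (* they are field automorphisms fixing C *)
  (Hbij_s : forall i, bijective (s i)) (Hbij_pi : bijective pi)
  (Hbij_w0 : bijective w0) (Hbij_w1 : bijective w1) (Hbij_r : bijective r)
  (HC : forall c : CC, [/\ forall i, s i (iota c) = iota c, pi (iota c) = iota c,
          w0 (iota c) = iota c, w1 (iota c) = iota c & r (iota c) = iota c])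
  (* action on the parameters *)
  (Hs_al : forall i j, s i (alpha (iota Q) a0 a1 j) =
      if i == j then (alpha (iota Q) a0 a1 i)^-1
      else alpha (iota Q) a0 a1 j * alpha (iota Q) a0 a1 i)
  (Hs_g : forall i, s i g = g)
  (Hpi_al : forall j, pi (alpha (iota Q) a0 a1 j) = alpha (iota Q) a0 a1 (nxt j))
  (Hpi_g : pi g = g)
  (Hw0_al : forall j, w0 (alpha (iota Q) a0 a1 j) = alpha (iota Q) a0 a1 j)
  (Hw1_al : forall j, w1 (alpha (iota Q) a0 a1 j) = alpha (iota Q) a0 a1 j)
  (Hr_al : forall j, r (alpha (iota Q) a0 a1 j) = alpha (iota Q) a0 a1 j)
  (Hw0_g : w0 g = g^-1)
  (Hw1_g : w1 g = ((iota Q) ^+ 2)^-1 * g^-1)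
  (Hr_g : r g = (iota Q)^-1 * g^-1)
  (* action on the tau variables *)
  (Hs_tau : forall i, s i (tau i) = s_tau (iota Q) g (alpha (iota Q) a0 a1) tau taub i)
  (Hs_taub : forall i, s i (taub i) = s_taub (iota Q) g (alpha (iota Q) a0 a1) tau taub i)
  (Hs_other : forall i j, j != i -> s i (tau j) = tau j /\ s i (taub j) = taub j)
  (Hpi_tau : forall i, pi (tau i) = tau (nxt i) /\ pi (taub i) = taub (nxt i))
  (Hw0_tau : forall i, w0 (tau i) = tau i /\
      w0 (taub i) = w0_taub (iota Q) g (alpha (iota Q) a0 a1) tau taub i)
  (Hw1_tau : forall i, w1 (taub i) = taub i /\
      w1 (tau i) = w1_tau (iota Q) g (alpha (iota Q) a0 a1) tau taub i)
  (Hr_tau : forall i, r (tau i) = taub i /\ r (taub i) = tau i)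
  (* T1 = pi s2 s1, T2 = s1 pi s2, T4 = r w0, and their inverse automorphisms *)
  (T1i T2i T4i : L -> L)
  (HT1i : cancel (pi \o s 2%R \o s 1%R) T1i) (HT1i' : cancel T1i (pi \o s 2%R \o s 1%R))
  (HT2i : cancel (s 1%R \o pi \o s 2%R) T2i) (HT2i' : cancel T2i (s 1%R \o pi \o s 2%R))
  (HT4i : cancel (r \o w0) T4i) (HT4i' : cancel T4i (r \o w0)) :
  let tN := tauNM (pi \o s 2%R \o s 1%R) T1i (s 1%R \o pi \o s 2%R) T2i
                  (r \o w0) T4i (tau 1%R) in
  forall n m N : int,
  s 0%R (tN n m N) = tN (- n) (m - n) N /\
  s 1%R (tN n m N) = tN (m - 1) (n + 1) N /\
  s 2%R (tN n m N) = tN (n - m) (- m) N /\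
  pi (tN n m N) = tN (- m) (n - m + 1) N /\
  w0 (tN n m N) = tN n m (- N) /\
  w1 (tN n m N) = tN n m (2 - N) /\
  r (tN n m N) = tN n m (1 - N).
Proof. by apply: realization_tau_lattice_action; eassumption. Qed.
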